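(* Let $D=D_F$ be a $\tau$-admissible Bregman divergence on an open convex domain $\mathcal{X}\subseteq\mathbb{R}^d$ and let $0<\varepsilon\le 1$. Let $w\subseteq\mathcal{X}$ be a set and $B_w\subseteq\mathcal{X}$ a Euclidean ball with $\mathrm{dist}(B_w,w)\ge\beta\cdot\mathrm{diam}(B_w)$, where $\beta\ge 4\tau^2/\varepsilon$. Then for any $q\in w$ and any $p,p'\in B_w$, $\dfrac{|D(q,p)-D(q,p')|}{D(q,p)}\le\varepsilon$.
   Context: $F$ is strictly convex and twice differentiable on $\mathcal{X}$ and $D_F(q,p)=F(q)-F(p)-\langle\nabla F(p),q-p\rangle$. For a site $p$, $f_p(x)=D_F(x,p)$ with derivatives in $x$. $D_F$ is $\tau$-admissible if for all $p,x\in\mathcal{X}$: $\|\nabla f_p(x)\|\,\|x-p\|\le\tau f_p(x)$ and $\|\nabla^2 f_p(x)\|\,\|x-p\|^2\le\tau^2 f_p(x)$ (Euclidean/spectral norms). $\mathrm{dist}$ denotes minimum Euclidean distance between sets. (In the paper, $w$ is a leaf cell of a BBD-tree decomposition and $B_w$ its inner-cluster ball; only the stated separation property is used.) *)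

From HB Require Import structures.
From mathcomp Require Import all_boot all_order all_algebra.
From mathcomp Require Import all_classical all_reals all_analysis.
Set Implicit Arguments. Unset Strict Implicit. Unset Printing Implicit Defensive.
Import Order.TTheory GRing.Theory Num.Theory.
Import numFieldNormedType.Exports.
Local Open Scope classical_set_scope.
Local Open Scope ring_scope.

Section Defs.
Variables (R : realType) (d : nat).
Notation V := 'rV[R]_d.

Definition euclid_dotp (u v : V) : R := \sum_(i < d) u 0 i * v 0 i.
Definition euclid_norm (v : V) : R := Num.sqrt (euclid_dotp v v).

Definition std_basis (i : 'I_d) : V := delta_mx 0 i.

Definition partial_deriv (i : 'I_d) (f : V -> R) (x : V) : R := 'D_(std_basis i) f x.
Definition gradient (f : V -> R) (x : V) : V := \row_i partial_deriv i f x.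
Definition hessian (f : V -> R) (x : V) : 'M[R]_d :=
  \matrix_(i, j) partial_deriv j (partial_deriv i f) x.

Definition spectral_norm (M : 'M[R]_d) : R :=
  sup [set euclid_norm (v *m M) | v in [set v : V | euclid_norm v <= 1]].

Definition strictly_convex_on (X : set V) (F : V -> R) : Prop :=
  forall x y t, X x -> X y -> x != y -> 0 < t < 1 ->
    F ((1 - t) *: x + t *: y) < (1 - t) * F x + t * F y.

Definition twice_differentiable_on (X : set V) (F : V -> R) : Prop :=
  forall x, X x -> differentiable F x /\ forall i, differentiable (partial_deriv i F) x.

Definition bregman_div (F : V -> R) (q p : V) : R :=
  F q - F p - euclid_dotp (gradient F p) (q - p).

Definition tau_admissible (X : set V) (F : V -> R) (tau : R) : Prop :=
  forall p x, X p -> X x ->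
    euclid_norm (gradient (bregman_div F ^~ p) x) * euclid_norm (x - p) <= tau * bregman_div F x p /\
    spectral_norm (hessian (bregman_div F ^~ p) x) * euclid_norm (x - p) ^+ 2
      <= tau ^+ 2 * bregman_div F x p.

Definition euclid_ball (c : V) (r : R) : set V := [set x | euclid_norm (x - c) <= r].
Definition euclid_diam (A : set V) : R :=
  sup [set euclid_norm (x - y) | x in A & y in A].
Definition euclid_dist (A B : set V) : R :=
  inf [set euclid_norm (x - y) | x in A & y in B].
End Defs.

From HB Require Import structures.
From mathcomp Require Import all_boot all_order all_algebra.
From mathcomp Require Import all_classical all_reals all_analysis.
From mathcomp Require Import ring lra.
Import Order.TTheory GRing.Theory Num.Theory.
Import numFieldNormedType.Exports.
Local Open Scope classical_set_scope.
Local Open Scope ring_scope.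

Set Implicit Arguments. Unset Strict Implicit. Unset Printing Implicit Defensive.

(** Move the site along the segment [p_t = p + t (p' - p)] and let
    [phi t = D(q, p_t)].  Then [phi' t = - <(q - p_t) H(p_t), p' - p>] with
    [H = ∇²F], so [|phi'| <= |H(p_t)| |q - p_t| |p' - p|].  Admissibility,
    integrated along the segment from [p_t] to [q], gives
    [|H(p_t)| |q - p_t|^2 <= tau^2 phi t]; since [beta |p' - p| <= |q - p_t|]
    this yields [|phi'| <= (tau^2 / beta) phi <= (eps / 4) phi].  A
    Grönwall-type estimate on [[0, 1]] then bounds [|phi 1 - phi 0|] by
    [eps / 2 * phi 0]. *)

Lemma norm_le_of_sqr_le (R : realDomainType) (x y : R) :
  0 <= y -> x ^+ 2 <= y ^+ 2 -> `|x| <= y.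
Proof.
move=> y0; rewrite -real_normK ?num_real // => xy.
by rewrite -(ler_pXn2r (isT : (0 < 2)%N)) ?nnegrE.
Qed.

Section EuclideanSpace.
Variables (R : realType) (d : nat).
Local Notation V := 'rV[R]_d.
Local Notation dotp := (@euclid_dotp R d).
Local Notation norm2 := (@euclid_norm R d).

Lemma dotpC (u v : V) : dotp u v = dotp v u.
Proof. by apply: eq_bigr => i _; rewrite mulrC. Qed.

Lemma dotpDl (u v w : V) : dotp (u + w) v = dotp u v + dotp w v.
Proof. by rewrite /euclid_dotp -big_split; apply: eq_bigr => i _; rewrite !mxE mulrDl. Qed.

Lemma dotpZl (a : R) (u v : V) : dotp (a *: u) v = a * dotp u v.
Proof. by rewrite /euclid_dotp mulr_sumr; apply: eq_bigr => i _; rewrite !mxE mulrA. Qed.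

Lemma dotpBl (u v w : V) : dotp (u - w) v = dotp u v - dotp w v.
Proof. by rewrite dotpDl -scaleN1r dotpZl mulN1r. Qed.

Lemma dotpDr (u v w : V) : dotp u (v + w) = dotp u v + dotp u w.
Proof. by rewrite dotpC dotpDl !(dotpC u). Qed.

Lemma dotpZr (a : R) (u v : V) : dotp u (a *: v) = a * dotp u v.
Proof. by rewrite dotpC dotpZl dotpC. Qed.

Lemma dotpBr (u v w : V) : dotp u (v - w) = dotp u v - dotp u w.
Proof. by rewrite dotpC dotpBl !(dotpC u). Qed.

Lemma dotp_delta (u : V) i : dotp u (delta_mx 0 i) = u 0 i.
Proof.
rewrite /euclid_dotp (bigD1 i) //= big1 => [|j ji].
  by rewrite !mxE !eqxx mulr1 addr0.
by rewrite !mxE (negbTE ji) andbF mulr0.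
Qed.

Lemma dotpp_ge0 (u : V) : 0 <= dotp u u.
Proof. by apply: sumr_ge0 => i _; rewrite -expr2 sqr_ge0. Qed.

Lemma euclid_norm_ge0 (u : V) : 0 <= norm2 u.
Proof. exact: sqrtr_ge0. Qed.

Lemma euclid_norm_sqr (u : V) : norm2 u ^+ 2 = dotp u u.
Proof. by rewrite sqr_sqrtr // dotpp_ge0. Qed.

Lemma cauchy_schwarz (u v : V) : `|dotp u v| <= norm2 u * norm2 v.
Proof.
have quad_ge0 t : 0 <= dotp u u + 2 * t * dotp u v + t ^+ 2 * dotp v v.
  have := dotpp_ge0 (u + t *: v).
  rewrite !dotpDl !dotpDr !dotpZl !dotpZr (dotpC v u); lra.
apply: norm_le_of_sqr_le; first by rewrite mulr_ge0 ?euclid_norm_ge0.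
rewrite exprMn !euclid_norm_sqr.
move: quad_ge0 (dotpp_ge0 u) (dotpp_ge0 v).
set a := dotp u u; set b := dotp u v; set c := dotp v v => quad_ge0 a0 c0.
have [c_eq0|c_neq0] := eqVneq c 0.
  have [->|b_neq0] := eqVneq b 0; first by rewrite expr0n mulr_ge0.
  have := quad_ge0 (- (a + 1) / (2 * b)).
  have -> : 2 * (- (a + 1) / (2 * b)) * b = - (a + 1) by field.
  rewrite c_eq0; lra.
have c_gt0 : 0 < c by rewrite lt_neqAle eq_sym c_neq0.
have := quad_ge0 (- b / c).
have -> : a + 2 * (- b / c) * b + (- b / c) ^+ 2 * c = a - b ^+ 2 / c.
  by field.
by rewrite subr_ge0 ler_pdivrMr // mulrC.
Qed.

Lemma euclid_normZ (a : R) (u : V) : norm2 (a *: u) = `|a| * norm2 u.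
Proof.
by rewrite /euclid_norm dotpZl dotpZr mulrA -expr2 sqrtrM ?sqr_ge0 // sqrtr_sqr.
Qed.

Lemma euclid_normN (u : V) : norm2 (- u) = norm2 u.
Proof. by rewrite -scaleN1r euclid_normZ normrN normr1 mul1r. Qed.

Lemma euclid_distC (u v : V) : norm2 (u - v) = norm2 (v - u).
Proof. by rewrite -euclid_normN opprB. Qed.

Lemma euclid_norm0 : norm2 (0 : V) = 0.
Proof. by rewrite -(scale0r (0 : V)) euclid_normZ normr0 mul0r. Qed.

Lemma ler_euclid_normD (u v : V) : norm2 (u + v) <= norm2 u + norm2 v.
Proof.
rewrite -[norm2 (u + v)]ger0_norm ?euclid_norm_ge0 //.
apply: norm_le_of_sqr_le; first by rewrite addr_ge0 ?euclid_norm_ge0.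
rewrite euclid_norm_sqr sqrrD !euclid_norm_sqr !dotpDl !dotpDr (dotpC v u).
have := cauchy_schwarz u v; have := ler_norm (dotp u v); lra.
Qed.

Lemma ler_euclid_norm_sum (I : finType) (f : I -> V) :
  norm2 (\sum_i f i) <= \sum_i norm2 (f i).
Proof.
elim/big_ind2: _ => [|x1 x2 y1 y2 h1 h2|//]; first by rewrite euclid_norm0.
exact: le_trans (ler_euclid_normD _ _) (lerD h1 h2).
Qed.

Lemma ler_abs_coord_euclid_norm (u : V) i : `|u 0 i| <= norm2 u.
Proof.
apply: norm_le_of_sqr_le; first exact: euclid_norm_ge0.
rewrite euclid_norm_sqr /euclid_dotp (bigD1 i) //= -expr2 lerDl.
by apply: sumr_ge0 => j _; rewrite -expr2 sqr_ge0.
Qed.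

Lemma euclid_norm_mulmx_bounded (M : 'M[R]_d) :
  exists2 K, 0 <= K & forall v : V, norm2 (v *m M) <= K * norm2 v.
Proof.
exists (\sum_i norm2 (row i M)); first by apply: sumr_ge0 => i _; apply: euclid_norm_ge0.
move=> v; rewrite mulmx_sum_row.
apply: le_trans (ler_euclid_norm_sum (fun i => v 0 i *: row i M)) _.
rewrite mulr_suml; apply: ler_sum => i _; rewrite euclid_normZ mulrC.
by apply: ler_wpM2l; [apply: euclid_norm_ge0 | apply: ler_abs_coord_euclid_norm].
Qed.

Lemma spectral_norm_ub (M : 'M[R]_d) :
  has_ubound [set norm2 (v *m M) | v in [set v : V | norm2 v <= 1]].
Proof.
have [K K0 HK] := euclid_norm_mulmx_bounded M.
exists K => _ [v /= v1 <-]; apply: le_trans (HK v) _.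
by rewrite -[leRHS]mulr1 ler_wpM2l.
Qed.

Lemma spectral_norm_ge0 (M : 'M[R]_d) : 0 <= spectral_norm M.
Proof.
apply: (ub_le_sup (spectral_norm_ub M)); exists 0; first by rewrite /= euclid_norm0.
by rewrite mul0mx euclid_norm0.
Qed.

Lemma ler_spectral_norm (M : 'M[R]_d) (w : V) :
  norm2 (w *m M) <= spectral_norm M * norm2 w.
Proof.
have [w_eq0|w_neq0] := eqVneq (norm2 w) 0.
  have [K _ HK] := euclid_norm_mulmx_bounded M.
  by rewrite w_eq0 mulr0; have := HK w; rewrite w_eq0 mulr0.
have w_gt0 : 0 < norm2 w by rewrite lt_neqAle eq_sym w_neq0 euclid_norm_ge0.
have : norm2 (((norm2 w)^-1 *: w) *m M) <= spectral_norm M.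
  apply: (ub_le_sup (spectral_norm_ub M)); exists ((norm2 w)^-1 *: w) => //=.
  by rewrite euclid_normZ ger0_norm ?invr_ge0 ?euclid_norm_ge0 // mulVf.
rewrite -scalemxAl euclid_normZ ger0_norm ?invr_ge0 ?euclid_norm_ge0 //.
by rewrite mulrC -ler_pdivlMr ?invr_gt0 // invrK.
Qed.

Lemma euclid_ball_segment (c x y : V) (r t : R) :
  euclid_ball c r x -> euclid_ball c r y -> 0 <= t <= 1 ->
  euclid_ball c r (x + t *: (y - x)).
Proof.
rewrite /euclid_ball /= => xr yr /andP[t0 t1].
have -> : x + t *: (y - x) - c = (1 - t) *: (x - c) + t *: (y - c).
  by apply/rowP => k; rewrite !mxE; ring.
apply: le_trans (ler_euclid_normD _ _) _.
rewrite !euclid_normZ !ger0_norm ?subr_ge0 //.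
have := ler_wpM2l (ltW (lt_le_trans ltr01 (lexx 1))) xr.
have := ler_wpM2l t0 yr; have : 0 <= 1 - t by rewrite subr_ge0.
nra.
Qed.

Lemma euclid_ball_diam_ge (c x y : V) (r : R) :
  euclid_ball c r x -> euclid_ball c r y -> norm2 (x - y) <= euclid_diam (euclid_ball c r).
Proof.
move=> xr yr; apply: ub_le_sup; last by exists x => //; exists y.
exists (r + r) => _ [a ar [b br <-]].
rewrite (_ : a - b = (a - c) + (c - b)); last by rewrite addrA subrK.
by apply: le_trans (ler_euclid_normD _ _) _; apply: lerD => //; rewrite euclid_distC.
Qed.

Lemma euclid_dist_le (A B : set V) x y : A x -> B y -> euclid_dist A B <= norm2 (x - y).
Proof.
move=> Ax By; apply: ge_inf; last by exists x => //; exists y.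
by exists 0 => _ [a _ [b _ <-]]; apply: euclid_norm_ge0.
Qed.

Lemma euclid_ball_sep (B : set V) (c x y z q : V) (r beta : R) :
  0 <= beta -> beta * euclid_diam (euclid_ball c r) <= euclid_dist (euclid_ball c r) B ->
  euclid_ball c r x -> euclid_ball c r y -> euclid_ball c r z -> B q ->
  beta * norm2 (x - y) <= norm2 (q - z).
Proof.
move=> beta0 dist_ge xr yr zr Bq; rewrite [leRHS]euclid_distC.
apply: le_trans (euclid_dist_le zr Bq); apply: le_trans dist_ge.
by apply: ler_wpM2l => //; apply: euclid_ball_diam_ge.
Qed.

Lemma convex_set_segment (X : set V) (x y : V) (s : R) :
  convex_set X -> X x -> X y -> 0 <= s <= 1 -> X (x + s *: (y - x)).
Proof.
move=> cX Xx Xy /andP[s0 s1].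
have := cX y x (Itv01 s0 s1); rewrite !inE => /(_ Xy Xx).
congr X; rewrite /conv /=.
by apply/rowP => k; rewrite !mxE /unstable.onem; ring.
Qed.

End EuclideanSpace.

Section RealCalculus.
Variable R : realType.

Lemma is_derive_inv (t : R) : t != 0 -> is_derive t 1 (fun s : R => s^-1) (- t ^- 2).
Proof.
move=> t0; have di : derivable (@id R) t 1 by apply: derivable_id.
split; first exact: (derivableV t0 di).
by rewrite (deriveV t0 di) derive_id /GRing.scale /= mulr1.
Qed.

Lemma is_derive_within_continuous (f df : R -> R) (a b : R) :
  (forall t : R, a <= t <= b -> is_derive t 1 f (df t)) ->
  {within `[a, b], continuous f}.
Proof.
move=> fd; apply: derivable_within_continuous => t; rewrite in_itv /= => tab.
by have [] := fd t tab.
Qed.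

(* With [m] a maximiser of [f] on [[0, 1]], the mean value theorem gives
   [(1 - k) f m <= f 0] and [|f 1 - f 0| <= k f m]. *)
Lemma gronwall_unit_interval (f df : R -> R) (k : R) :
  0 <= k <= 1 / 2 ->
  (forall t : R, 0 <= t <= 1 -> is_derive t 1 f (df t)) ->
  (forall t : R, 0 <= t <= 1 -> `|df t| <= k * f t) ->
  `|f 1 - f 0| <= 2 * k * f 0.
Proof.
move=> /andP[k0 k1] fd dfk.
have fc a b : 0 <= a -> b <= 1 -> {within `[a, b], continuous f}.
  move=> a0 b1; apply: (is_derive_within_continuous (df := df)) => t /andP[a_le_t tb].
  by apply: fd; rewrite (le_trans a0 a_le_t) (le_trans tb b1).
have [m + f_le_fm] := EVT_max ler01 (fc 0 1 (lexx 0) (lexx 1)).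
rewrite in_itv /= => /andP[m0 m1].
have variation_le b : 0 <= b <= 1 -> `|f b - f 0| <= k * f m * b.
  move=> /andP[b0 b1].
  have fdi (t : R) : t \in `]0, b[ -> is_derive t 1 f (df t).
    by rewrite in_itv /= => /andP[t0 tb]; apply: fd; rewrite ltW //= (ltW (lt_le_trans tb b1)).
  have [c + ->] := MVT_segment b0 fdi (fc 0 b (lexx 0) b1).
  rewrite in_itv /= => /andP[c0 cb].
  rewrite subr0 normrM (ger0_norm b0) ler_wpM2r //.
  have c01 : 0 <= c <= 1 by rewrite c0 (le_trans cb b1).
  by apply: le_trans (dfk c c01) _; rewrite ler_wpM2l // f_le_fm // in_itv /= c01.
have kfm_ge0 : 0 <= k * f m by apply: le_trans (dfk m _); rewrite ?m0 ?m1.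
have := variation_le m; rewrite m0 m1 => /(_ isT) fm.
have := variation_le 1; rewrite ler01 lexx mulr1 => /(_ isT) f1.
have fm_le : f m - f 0 <= k * f m.
  apply: le_trans (ler_norm _) (le_trans fm _).
  by rewrite -[leRHS]mulr1 ler_wpM2l.
have : 0 <= (1 - 2 * k) * (k * f m) by rewrite mulr_ge0 //; lra.
nra.
Qed.

(* [chi t = a psi(t) / t - S t] is nondecreasing on [(0, 1]] and bounded below
   by [- S t]; letting [t -> 0] gives [chi 1 >= 0]. *)
Lemma ratio_deriv_lower_bound (psi dpsi : R -> R) (a S : R) :
  0 <= a ->
  (forall t : R, 0 < t <= 1 -> is_derive t 1 psi (dpsi t)) ->
  (forall t : R, 0 < t <= 1 -> 0 <= psi t) ->
  (forall t : R, 0 < t <= 1 -> S * t ^+ 2 <= a * (t * dpsi t - psi t)) ->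
  S <= a * psi 1.
Proof.
move=> a0 psid psi_ge0 hS.
pose chi t := a * (psi t * t^-1) - S * t.
pose dchi t := a * (dpsi t * t^-1 + psi t * (- t ^- 2)) - S.
have chid (t : R) : 0 < t <= 1 -> is_derive t 1 chi (dchi t).
  move=> /andP[t0 t1].
  have := is_deriveB (is_deriveZ a (is_deriveM (psid t _) (is_derive_inv (lt0r_neq0 t0))))
                     (is_deriveZ S (@is_derive_id _ _ t 1)).
  rewrite t0 t1 => /(_ isT) hd; apply: (is_derive_eq hd).
  by rewrite /dchi /GRing.scale /=; ring.
have dchi_ge0 (t : R) : 0 < t <= 1 -> 0 <= dchi t.
  move=> /andP[t0 t1].
  have -> : dchi t = (a * (t * dpsi t - psi t) - S * t ^+ 2) / t ^+ 2.
    by rewrite /dchi; field; apply: lt0r_neq0.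
  by rewrite divr_ge0 ?sqr_ge0 // subr_ge0 hS ?t0.
have chi_ge (s : R) : 0 < s < 1 -> - S * s <= a * psi 1 - S.
  move=> /andP[s0 s1].
  have chidi (t : R) : t \in `]s, 1[ -> is_derive t 1 chi (dchi t).
    by rewrite in_itv /= => /andP[st t1]; apply: chid; rewrite (lt_trans s0 st) ltW.
  have chic : {within `[s, 1], continuous chi}.
    apply: (is_derive_within_continuous (df := dchi)) => t /andP[st t1].
    by apply: chid; rewrite (lt_le_trans s0 st) t1.
  have [c + chi_diff] := MVT s1 chidi chic.
  rewrite in_itv /= => /andP[sc c1].
  have : 0 <= chi 1 - chi s.
    rewrite chi_diff; apply: mulr_ge0; last by rewrite subr_ge0 ltW.
    by apply: dchi_ge0; rewrite (lt_trans s0 sc) ltW.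
  have : 0 <= a * (psi s * s^-1).
    by rewrite mulr_ge0 // divr_ge0 ?psi_ge0 ?s0 ?(ltW s0) ?(ltW s1).
  rewrite /chi invr1 !mulr1; lra.
have psi1_ge0 : 0 <= a * psi 1 by rewrite mulr_ge0 // psi_ge0 // ltr01 lexx.
rewrite leNgt; apply/negP => aS.
have S_gt0 : 0 < S by apply: le_lt_trans aS.
have := chi_ge ((S - a * psi 1) / (2 * S)).
rewrite divr_gt0 ?subr_gt0 ?mulr_gt0 // ltr_pdivrMr ?mulr_gt0 //=.
have -> : - S * ((S - a * psi 1) / (2 * S)) = - (S - a * psi 1) / 2.
  by field; apply: lt0r_neq0.
move=> /(_ ltac:(lra)); lra.
Qed.

End RealCalculus.

Section Differentiation.
Variables (R : realType) (d : nat).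
Local Notation V := 'rV[R]_d.
Local Notation dotp := (@euclid_dotp R d).

Lemma is_derive_line (f : V -> R) (a v : V) (t : R) :
  derivable f (a + t *: v) v ->
  is_derive t 1 (fun s => f (a + s *: v)) ('D_v f (a + t *: v)).
Proof.
move=> df.
have E : (fun h : R => h^-1 *: (((fun s => f (a + s *: v)) \o shift t) (h *: 1)
            - f (a + t *: v))) =
         (fun h : R => h^-1 *: ((f \o shift (a + t *: v)) (h *: v) - f (a + t *: v))).
  apply/funext => h /=; congr (_ *: (f _ - _)).
  by rewrite [h *: 1]mulr1 scalerDl addrCA addrA.
by split; [move: df; rewrite /derivable -E | rewrite /derive E].
Qed.

Lemma deriveE_partial (f : V -> R) x v : differentiable f x ->
  'D_v f x = \sum_i v 0 i * partial_deriv i f x.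
Proof.
move=> df; rewrite deriveE // {1}(row_sum_delta v) linear_sum.
by apply: eq_bigr => i _; rewrite linearZ /= /partial_deriv deriveE.
Qed.

Lemma dotp_gradient (f : V -> R) x u : differentiable f x ->
  dotp (gradient f x) u = 'D_u f x.
Proof.
move=> df; rewrite deriveE_partial // /euclid_dotp; apply: eq_bigr => i _.
by rewrite mxE mulrC.
Qed.

Lemma is_derive_dotp (c z v : V) : is_derive z v (fun y => dotp c y) (dotp c v).
Proof.
have cv : (fun h : R => h^-1 *: (((fun y => dotp c y) \o shift z) (h *: v) - dotp c z))
    @ 0^' --> dotp c v.
  apply: cvg_near_cst; near=> h.
  have h0 : h != 0 by near: h; apply: nbhs_dnbhs_neq.
  by rewrite /= dotpDr dotpZr addrK /GRing.scale /= mulKf.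
by split; [apply/cvg_ex; exists (dotp c v) | apply: cvg_lim cv].
Unshelve. all: by end_near.
Qed.

(* [f_y = D_F(., y)] differs from [F] by an affine function. *)
Lemma partial_deriv_bregman (F : V -> R) (y z : V) i : differentiable F z ->
  partial_deriv i (bregman_div F ^~ y) z = partial_deriv i F z - gradient F y 0 i.
Proof.
move=> dF; set g := gradient F y.
have [affine_derivable affine_derive] :=
  is_deriveD (is_derive_cst (F y - dotp g y) z (delta_mx 0 i))
             (is_derive_dotp g z (delta_mx 0 i)).
have -> : bregman_div F ^~ y = F - (cst (F y - dotp g y) + dotp g).
  by apply/funext => x; rewrite /bregman_div dotpBr !fctE; lra.
rewrite /partial_deriv deriveB ?affine_derive ?add0r ?dotp_delta //.
exact: diff_derivable.
Qed.

Lemma hessian_bregman (X : set V) (F : V -> R) (x y : V) :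
  open X -> X x -> twice_differentiable_on X F ->
  hessian (bregman_div F ^~ y) x = hessian F x.
Proof.
move=> oX Xx tdF; apply/matrixP => i j; rewrite !mxE.
have near_x : \forall z \near x, partial_deriv i (bregman_div F ^~ y) z =
    (partial_deriv i F - cst (gradient F y 0 i)) z.
  apply: filterS (oX x Xx) => z Xz /=.
  by rewrite partial_deriv_bregman //; apply: (tdF z Xz).1.
rewrite {1}/partial_deriv (near_eq_derive _ near_x) deriveB.
- by rewrite derive_cst subr0.
- exact/diff_derivable/((tdF x Xx).2 i).
- exact: derivable_cst.
Qed.

End Differentiation.

Section Bregman.
Variables (R : realType) (d : nat).
Local Notation V := 'rV[R]_d.
Local Notation dotp := (@euclid_dotp R d).
Local Notation norm2 := (@euclid_norm R d).
Variables (X : set V) (F : V -> R).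
Hypothesis oX : open X.
Hypothesis cX : convex_set X.
Hypothesis scF : strictly_convex_on X F.
Hypothesis tdF : twice_differentiable_on X F.

Lemma bregman_div_ge0 (x y : V) : X x -> X y -> 0 <= bregman_div F y x.
Proof.
move=> Xx Xy; have dF := (tdF Xx).1.
have [->|xy] := eqVneq x y.
  by rewrite /bregman_div !subrr /euclid_dotp big1 ?subr0 // => i _; rewrite !mxE mulr0.
rewrite /bregman_div dotp_gradient // subr_ge0.
set u := y - x.
set slope := fun h : R => h^-1 *: ((F \o shift x) (h *: u) - F x).
have slope_cvg : slope @ 0^' --> 'D_u F x by apply: diff_derivable.
have slope_cvg_right : slope @ at_right 0 --> 'D_u F x.
  move=> A /slope_cvg /nbhs_ballP [_ /posnumP[e] xe_A].
  by exists e%:num => //= z xe_z /gt_eqF/negbT/xe_A; apply.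
apply: (cvgr_to_le slope_cvg_right); near=> h.
have h0 : 0 < h by near: h; apply: nbhs_right_gt.
have h01 : 0 < h < 1 by rewrite h0; near: h; apply: nbhs_right_lt.
have := scF Xx Xy xy h01.
have -> : (1 - h) *: x + h *: y = h *: u + x.
  by apply/rowP => k; rewrite /u !mxE; ring.
by move=> lt; rewrite /slope /= /GRing.scale /= ler_pdivrMl //; lra.
Unshelve. all: by end_near.
Qed.

Lemma bregman_div_sym (x y : V) :
  bregman_div F x y + bregman_div F y x = dotp (gradient F y - gradient F x) (y - x).
Proof.
by rewrite /bregman_div dotpBl !dotpBr; ring.
Qed.

Lemma is_derive_bregman_site (p v q : V) (t : R) : X (p + t *: v) ->
  is_derive t 1 (fun s => bregman_div F q (p + s *: v))
    (- dotp ((q - (p + t *: v)) *m hessian F (p + t *: v)) v).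
Proof.
move=> Xy; set y := p + t *: v.
have [dF dP] := tdF Xy.
have -> : (fun s => bregman_div F q (p + s *: v)) =
   (fun s => F q - F (p + s *: v) - \sum_i (partial_deriv i F (p + s *: v) *
                                           (q 0 i - p 0 i - s * v 0 i))).
  apply/funext => s; rewrite /bregman_div /euclid_dotp; congr (_ - _).
  by apply: eq_bigr => i _; rewrite !mxE; congr (_ * _); ring.
have dS i : is_derive t 1 (fun s => partial_deriv i F (p + s *: v) *
                                   (q 0 i - p 0 i - s * v 0 i))
    ((q 0 i - p 0 i - t * v 0 i) * 'D_v (partial_deriv i F) y -
       partial_deriv i F y * v 0 i).
  have := is_deriveM (is_derive_line (diff_derivable (v := v) (dP i)))
    (is_deriveB (is_derive_cst (q 0 i - p 0 i) t 1)
                (is_deriveM (@is_derive_id _ _ t 1) (is_derive_cst (v 0 i) t 1))).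
  by move=> hd; apply: (is_derive_eq hd); rewrite -/y /= !fctE /GRing.scale /=; ring.
have := is_deriveB (is_deriveB (is_derive_cst (F q) t 1)
                               (is_derive_line (diff_derivable (v := v) dF)))
                   (is_derive_sum dS).
rewrite fct_sumE => hd; apply: (is_derive_eq hd).
rewrite sumrB (deriveE_partial _ dF).
have -> : \sum_i (q 0 i - p 0 i - t * v 0 i) * 'D_v (partial_deriv i F) y =
          dotp ((q - y) *m hessian F y) v.
  rewrite /euclid_dotp.
  under eq_bigr => i _ do rewrite (deriveE_partial _ (dP i)) mulr_sumr.
  under [RHS]eq_bigr => j _ do rewrite mxE mulr_suml.
  rewrite exchange_big /=; apply: eq_bigr => i _; apply: eq_bigr => j _.
  by rewrite !mxE; ring.
rewrite -/y (eq_bigr _ (fun i _ => mulrC (v 0 i) _)); ring.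
Qed.

Variable tau : R.
Hypothesis admF : tau_admissible X F tau.

(* Admissibility bounds the Hessian at the point, not at the site.  Moving the
   site along the segment from [x] to [q] turns it into the differential
   inequality [S s^2 <= tau^2 (s psi' s - psi s)] for [psi s = D(x + s u, x)],
   because [D(x, x + s u) = s psi' s - psi s] by [bregman_div_sym]. *)
Lemma spectral_hessian_le_bregman (x q : V) : X x -> X q ->
  spectral_norm (hessian F x) * norm2 (q - x) ^+ 2 <= tau ^+ 2 * bregman_div F q x.
Proof.
move=> Xx Xq; set u := q - x.
have Xs (s : R) : 0 <= s <= 1 -> X (x + s *: u) by apply: convex_set_segment.
pose psi s := bregman_div F (x + s *: u) x.
pose dpsi s := dotp (gradient F (x + s *: u) - gradient F x) u.
have psi1 : psi 1 = bregman_div F q x by rewrite /psi scale1r /u addrC subrK.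
rewrite -psi1; apply: (ratio_deriv_lower_bound (dpsi := dpsi)); first exact: sqr_ge0.
- move=> t /andP[t0 t1]; have Xt : X (x + t *: u) by apply: Xs; rewrite ltW.
  have -> : psi = fun s => F (x + s *: u) - F x - s * dotp (gradient F x) u.
    by apply/funext => s; rewrite /psi /bregman_div [x + _]addrC addrK dotpZr.
  have := is_deriveB (is_deriveB (is_derive_line (diff_derivable (v := u) (tdF Xt).1))
                                 (is_derive_cst (F x) t 1))
           (is_deriveM (@is_derive_id _ _ t 1) (is_derive_cst (dotp (gradient F x) u) t 1)).
  move=> hd; apply: (is_derive_eq hd).
  rewrite /dpsi dotpBl !dotp_gradient ?scaler0 ?fctE ?add0r ?subr0 ?[_%:A]mulr1 //.
  + exact: (tdF Xt).1.
  + exact: (tdF Xx).1.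
- move=> t /andP[t0 t1]; apply: bregman_div_ge0 => //.
  by apply: Xs; rewrite ltW.
- move=> s /andP[s0 s1]; have Xt : X (x + s *: u) by apply: Xs; rewrite ltW.
  have [_] := admF Xt Xx; rewrite (hessian_bregman _ oX Xx tdF).
  have -> : x - (x + s *: u) = - (s *: u) by rewrite opprD addNKr.
  rewrite euclid_normN euclid_normZ (ger0_norm (ltW s0)) => adm_s.
  have -> : s * dpsi s - psi s = bregman_div F x (x + s *: u).
    have := bregman_div_sym x (x + s *: u).
    have -> : x + s *: u - x = s *: u by rewrite addrC addKr.
    by rewrite /dpsi /psi dotpZr => <-; ring.
  by apply: le_trans adm_s; rewrite exprMn; lra.
Qed.

Lemma bregman_site_deriv_le (x q v : V) (beta k : R) : X x -> X q ->
  0 <= k -> tau ^+ 2 <= beta * k -> beta * norm2 v <= norm2 (q - x) ->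
  `|dotp ((q - x) *m hessian F x) v| <= k * bregman_div F q x.
Proof.
move=> Xx Xq k0 tau_le sep.
have D0 := bregman_div_ge0 Xx Xq.
have v0 := euclid_norm_ge0 v.
have hess_le := spectral_hessian_le_bregman Xx Xq.
set rho := norm2 (q - x) in sep hess_le *; set S := spectral_norm (hessian F x) in hess_le *.
set D := bregman_div F q x in D0 hess_le *.
have deriv_le : `|dotp ((q - x) *m hessian F x) v| <= S * rho * norm2 v.
  apply: le_trans (cauchy_schwarz _ _) _.
  by apply: ler_wpM2r; [apply: euclid_norm_ge0 | apply: ler_spectral_norm].
have [rho_eq0|rho_neq0] := eqVneq rho 0.
  by apply: le_trans deriv_le _; rewrite rho_eq0 mulr0 mul0r mulr_ge0.
have rho_gt0 : 0 < rho by rewrite lt_neqAle eq_sym rho_neq0 euclid_norm_ge0.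
rewrite -(ler_pM2r rho_gt0).
have hess_le' : S * rho ^+ 2 * norm2 v <= tau ^+ 2 * D * norm2 v by apply: ler_wpM2r.
have := ler_wpM2r (ltW rho_gt0) deriv_le.
have := ler_wpM2r (mulr_ge0 D0 v0) tau_le.
have := ler_wpM2l (mulr_ge0 k0 D0) sep.
lra.
Qed.

End Bregman.

Unset Implicit Arguments. Set Strict Implicit.

Theorem lemma9 (R : realType) (d : nat) (X : set 'rV[R]_d) (F : 'rV[R]_d -> R)
    (tau eps beta : R) (w : set 'rV[R]_d) (c : 'rV[R]_d) (r : R) :
  open X -> convex_set X ->
  strictly_convex_on X F -> twice_differentiable_on X F ->
  tau_admissible X F tau ->
  0 < eps <= 1 ->
  w `<=` X -> 0 <= r -> euclid_ball c r `<=` X ->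
  beta >= 4 * tau ^+ 2 / eps ->
  euclid_dist (euclid_ball c r) w >= beta * euclid_diam (euclid_ball c r) ->
  forall q p p', w q -> euclid_ball c r p -> euclid_ball c r p' ->
    `|bregman_div F q p - bregman_div F q p'| / bregman_div F q p <= eps.
Proof.
move=> oX cX scF tdF admF /andP[eps0 eps1] wX _ ballX beta_ge dist_ge q p p' wq pr p'r.
have seg (t : R) : 0 <= t <= 1 -> euclid_ball c r (p + t *: (p' - p)).
  exact: euclid_ball_segment.
have k_ge0 : 0 <= eps / 4 by rewrite divr_ge0 ?(ltW eps0).
have tau_le : tau ^+ 2 <= beta * (eps / 4).
  by move: beta_ge; rewrite ler_pdivrMr // => h; lra.
have beta_ge0 : 0 <= beta.
  have : 0 <= 4 * tau ^+ 2 / eps by rewrite divr_ge0 ?(ltW eps0) // mulr_ge0 ?sqr_ge0.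
  by move: beta_ge; lra.
have rate (t : R) : 0 <= t <= 1 ->
    `|- euclid_dotp ((q - (p + t *: (p' - p))) *m hessian F (p + t *: (p' - p))) (p' - p)|
    <= eps / 4 * bregman_div F q (p + t *: (p' - p)).
  move=> t01; rewrite normrN.
  exact: (bregman_site_deriv_le oX cX scF tdF admF (ballX _ (seg t t01)) (wX _ wq) k_ge0
    tau_le (euclid_ball_sep beta_ge0 dist_ge p'r pr (seg t t01) wq)).
have := gronwall_unit_interval (f := fun s => bregman_div F q (p + s *: (p' - p)))
  (k := eps / 4) _ (fun t t01 => is_derive_bregman_site tdF q (ballX _ (seg t t01))) rate.
rewrite /= scale0r addr0 scale1r (addrC p) subrK distrC k_ge0 /= => /(_ ltac:(lra)) Delta_le.
have D_ge0 := bregman_div_ge0 scF tdF (ballX _ pr) (wX _ wq).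
have [D_eq0|D_neq0] := eqVneq (bregman_div F q p) 0.
  by rewrite D_eq0 invr0 mulr0 ltW.
by rewrite ler_pdivrMr ?lt_neqAle 1?eq_sym ?D_neq0 //; nra.
Qed.
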